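(* Consider the algorithm MoBIL-VI described in the context with weights $w_n=n^p$ and $p>1$. Then $$\mathcal R(p)\le C_p\Big(\frac{pG_h^2}{2(p-1)\mu_h}\frac1{N^2}+\frac{\epsilon^w_{\hat{\mathcal F}}}{pN}\Big),\qquad C_p=\frac{(p+1)^2e^{p/N}}{2\mu_f}.$$
   Context: Setting: $\Pi$ is a compact convex subset of a normed space (norm $\|\cdot\|$, dual norm $\|\cdot\|_*$) of policies; $d_\pi$ is a distribution over state–time pairs induced by $\pi$; $\pi^*$ is an expert policy and $D(\pi^*_s\|\pi_s)\ge0$ a discrepancy; $F(\pi',\pi)=\mathbb E_{(s,t)\sim d_{\pi'}}[D(\pi^*_s\|\pi_s)]$ and $\nabla_2F$ is its gradient in the second argument. $\hat{\mathcal F}$ is a convex set (in a normed space) of ''predictive models'' $\hat F$, each a bivariate function on $\Pi\times\Pi$ with gradient $\nabla_2\hat F$ in the second argument; assume there is $L\ge0$ with $\|\nabla_2\hat F(\pi,\pi)-\nabla_2\hat F(\pi',\pi')\|_*\le L\|\pi-\pi'\|$ for all $\hat F\in\hat{\mathcal F}$, $\pi,\pi'\in\Pi$. Online learning: in round $n$ the learner plays $\pi_n$, the policy cost is $f_n(\pi)=F(\pi_n,\pi)$, and the model cost $h_n:\hat{\mathcal F}\to\mathbb R$ satisfies $h_n(\hat F)\ge\|\nabla_2F(\pi_n,\pi_n)-\nabla_2\hat F(\pi_n,\pi_n)\|_*^2$. Assume each $f_n$ is $\mu_f$-strongly convex with $\|\nabla f_n(\pi)\|_*\le G_f$ on $\Pi$,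 and each $h_n$ is $\mu_h$-strongly convex with $\|\nabla h_n(\hat F)\|_*\le G_h$ on $\hat{\mathcal F}$ ($\mu_f,\mu_h>0$). MoBIL-VI (deterministic): with weights $w_n=n^p$, in round $n$ update the model by $\hat F_{n+1}\in\operatorname{arg\,min}_{\hat F\in\hat{\mathcal F}}\sum_{m=1}^n\frac{w_m}{m}h_m(\hat F)$, and then set $\pi_{n+1}\in\Pi$ to be an (exact) solution of the variational inequality $\langle\Phi_n(\pi_{n+1}),\pi'-\pi_{n+1}\rangle\ge0$ for all $\pi'\in\Pi$, where $\Phi_n(\pi)=\sum_{m=1}^n w_m\nabla f_m(\pi)+w_{n+1}\nabla_2\hat F_{n+1}(\pi,\pi)$. Define $\mathrm{regret}^w(\Pi)=\max_{\pi\in\Pi}\sum_{n=1}^N w_n(f_n(\pi_n)-f_n(\pi))$ and $\mathcal R(p)=\mathrm{regret}^w(\Pi)/w_{1:N}$, $w_{1:N}=\sum_{n=1}^N w_n$. The constant $\epsilon^w_{\hat{\mathcal F}}$ satisfies: for all $N$ and weights $\theta_n>0$ with $\sum_{n=1}^N\theta_n=1$, $\max_{\{\pi_n\in\Pi\}}\min_{\hat F\in\hat{\mathcal F}}\sum_{n=1}^N\theta_n h_n(\hat F)\le\epsilon^w_{\hat{\mathcal F}}$.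
   Formalization: The initial policy π₁ is not arbitrary: it solves the variational inequality $\langle\Phi_0(\pi_1),\pi'-\pi_1\rangle\ge0$ for all π′ ∈ Π, with $\Phi_0(\pi)=w_1\nabla_2\hat F_1(\pi,\pi)$ for some initial model $\hat F_1\in\hat{\mathcal F}$. The statement above fails without it. *)

From HB Require Import structures.
From mathcomp Require Import all_boot all_order all_algebra.
From mathcomp Require Import all_classical all_reals all_analysis.
Set Implicit Arguments. Unset Strict Implicit. Unset Printing Implicit Defensive.
Import Order.TTheory GRing.Theory Num.Theory.
Import numFieldNormedType.Exports.
Local Open Scope classical_set_scope.
Local Open Scope ring_scope.

Section Defs.
Variable R : realType.

Definition dual_norm (V : normedModType R) (g : V -> R) : R :=
  sup [set g x | x in [set x : V | `|x| <= 1]].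

Definition strongly_convex_on (V : normedModType R) (A : set V) (mu : R)
    (f : V -> R) : Prop :=
  forall x y t, A x -> A y -> 0 <= t <= 1 ->
    f (t *: x + (1 - t) *: y) <=
      t * f x + (1 - t) * f y - mu / 2 * t * (1 - t) * `|x - y| ^+ 2.

Definition wpow (p : R) (n : nat) : R := powR (n%:R) p.

Definition wsum (p : R) (N : nat) : R := \sum_(1 <= n < N.+1) wpow p n.

Definition PhiVI (X M : normedModType R) (p : R) (F : X -> X -> R)
    (Fhat : M -> X -> X -> R) (pi : nat -> X) (Fh : nat -> M) (n : nat)
    (x v : X) : R :=
  \sum_(1 <= m < n.+1) wpow p m * ('d (F (pi m)) x) v
  + wpow p n.+1 * ('d (Fhat (Fh n.+1) x) x) v.

(* weighted regret against a fixed comparator x :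
   sum_{n=1}^N w_n (f_n(pi_n) - f_n(x)), with f_n = F(pi_n, .) *)
Definition wregret_at (X : normedModType R) (p : R) (F : X -> X -> R)
    (pi : nat -> X) (N : nat) (x : X) : R :=
  \sum_(1 <= n < N.+1) wpow p n * (F (pi n) (pi n) - F (pi n) x).

End Defs.

From HB Require Import structures.
From mathcomp Require Import all_boot all_order all_algebra.
From mathcomp Require Import all_classical all_reals all_analysis.
From mathcomp Require Import ring lra.
Import Order.TTheory GRing.Theory Num.Theory.
Import numFieldNormedType.Exports.
Local Open Scope classical_set_scope.
Local Open Scope ring_scope.

(* Both learners are analysed as "strong follow-the-leader". For the policies, the cumulative
   loss sum_(m <= n) w_m f_m is (mu_f w_{1:n})-strongly convex and the VI makes pi_(n+1) its
   stationary point up to the error of the predicted gradient, so the leader gap of round n is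
   at most w_n^2 h_n(Fhat_n) / (2 mu_f w_{1:n}); since w_n^2 <= (p + 1) (w_n / n) w_{1:n},
   the weighted regret is at most (p + 1) / (2 mu_f) times the (w_n / n)-weighted loss of the
   models. The models are FTL iterates on the mu_h-strongly convex, G_h-Lipschitz losses h_n
   with weights w_n / n = n^(p-1), so their loss exceeds that of the best fixed model, at most
   eps per unit weight, by O(sum n^(p-2)). The power sums are compared with N^q / q through
   the tangent inequalities of t |-> t^q, together with (N + 1)^q <= N^q e^(q/N). *)

Section StrongConvexity.
Context {R : realType} {V : normedModType R}.
Implicit Types (A : set V) (f : V -> R) (mu : R).

Lemma strongly_convex_diff_le {A mu f x y} :
  strongly_convex_on A mu f -> A x -> A y -> differentiable f x ->
  'd f x (y - x) + mu / 2 * `|y - x| ^+ 2 <= f y - f x.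
Proof.
move=> scf Ax Ay dfx; set v := y - x; set c := mu / 2 * `|v| ^+ 2.
pose q t := t^-1 *: ((f \o shift x) (t *: v) - f x).
have qv : q @ 0^'+ --> 'd f x v.
  by rewrite -deriveE //; apply: cvg_dnbhs_at_right; exact: diff_derivable.
have bv : (fun t => f y - f x - c + c * t) @ 0^'+ --> f y - f x - c.
  apply: cvg_at_right_filter; rewrite -[X in _ --> X]addr0.
  apply: cvgD; first exact: cvg_cst.
  by rewrite -[X in _ --> X](mulr0 c); apply: cvgM; [exact: cvg_cst | exact: cvg_id].
suff : 'd f x v <= f y - f x - c by rewrite -/v -/c; lra.
apply: (ler_cvg_to qv bv).
near=> t.
have t0 : 0 < t by near: t; exact: nbhs_right_gt.
have t1 : t <= 1 by near: t; apply: nbhs_right_le; exact: ltr01.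
have := scf y x t Ay Ax; rewrite ltW // t1 => /(_ isT).
have -> : t *: y + (1 - t) *: x = t *: v + x.
  by rewrite /v scalerBr scalerBl scale1r addrA addrAC.
rewrite /q /= -ler_pdivlMl ?invr_gt0 // invrK /c -/v; nra.
Unshelve. all: by end_near.
Qed.

Lemma strongly_convex_sum (I : eqType) (r : seq I) A mu (g : I -> V -> R)
    (c : I -> R) :
  {in r, forall i, strongly_convex_on A mu (g i)} -> {in r, forall i, 0 <= c i} ->
  strongly_convex_on A (mu * \sum_(i <- r) c i)
    (fun y => \sum_(i <- r) c i * g i y).
Proof.
move=> scg c0 x y t Ax Ay t01 /=; set d := `|x - y| ^+ 2.
have -> : t * (\sum_(i <- r) c i * g i x) + (1 - t) * (\sum_(i <- r) c i * g i y)
    - mu * (\sum_(i <- r) c i) / 2 * t * (1 - t) * d =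
    \sum_(i <- r) c i * (t * g i x + (1 - t) * g i y - mu / 2 * t * (1 - t) * d).
  rewrite [RHS](eq_bigr (fun i => t * (c i * g i x) + (1 - t) * (c i * g i y)
    - mu / 2 * t * (1 - t) * d * c i)); last by move=> i _; ring.
  by rewrite sumrB big_split /= -!mulr_sumr; ring.
rewrite big_seq [leRHS]big_seq; apply: ler_sum => i ri.
by rewrite ler_wpM2l ?c0 ?scg.
Qed.

Lemma strongly_convex_argmin_gap A mu f z y :
  convex_set A -> strongly_convex_on A mu f -> A z -> A y ->
  (forall u, A u -> f z <= f u) -> mu / 2 * `|y - z| ^+ 2 <= f y - f z.
Proof.
move=> cA scf Az Ay fz_min; set c := mu / 2 * `|y - z| ^+ 2.
have gap t : 0 < t -> t <= 1 -> c * (1 - t) <= f y - f z.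
  move=> t0 t1; rewrite -(ler_pM2l t0).
  have Atyz : A (t *: y + (1 - t) *: z).
    by have := cA y z (Itv01 (ltW t0) t1); rewrite !inE; apply.
  have := fz_min _ Atyz; have := scf y z t Ay Az; rewrite ltW // t1 => /(_ isT).
  rewrite /c; nra.
have gap1 : 0 <= f y - f z by have := gap 1 ltr01 (lexx _); rewrite subrr mulr0.
rewrite leNgt; apply/negP => gap_lt_c; set b := f y - f z in gap1 gap_lt_c gap.
have c0 : 0 < c by exact: le_lt_trans gap_lt_c.
have c2 : 0 < 2 * c by rewrite pmulr_rgt0.
have := gap ((c - b) / (2 * c)).
have -> : c * (1 - (c - b) / (2 * c)) = (c + b) / 2 by field; rewrite gt_eqF.
rewrite divr_gt0 ?subr_gt0 // ler_pdivrMr //; lra.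
Qed.

End StrongConvexity.

Section DualNorm.
Context {R : realType} {V : normedModType R}.

Lemma dual_norm_lbound (g : V -> R) r :
  (forall v, `|g v| <= r * `|v|) -> (forall k v, g (k *: v) = k * g v) ->
  forall v, - (dual_norm g * `|v|) <= g v.
Proof.
move=> gr gZ v; rewrite lerNl -[- g v]mulN1r -gZ scaleN1r -(normrN v).
have g0 : g 0 = 0 by rewrite -(scale0r (0 : V)) gZ mul0r.
set u := - v; have [->|u0] := eqVneq u 0; first by rewrite g0 normr0 mulr0.
have ubS : has_ubound [set g x | x in [set x : V | `|x| <= 1]].
  exists `|r| => _ [x /= x1 <-]; apply: le_trans (ler_norm _) _.
  apply: le_trans (gr x) _; apply: le_trans (ler_norm _) _.
  by rewrite normrM normr_id ler_piMr.
have uP : 0 < `|u| by rewrite normr_gt0.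
have -> : g u = `|u| * g (`|u|^-1 *: u) by rewrite gZ mulrA mulfV ?gt_eqF ?mul1r.
rewrite mulrC ler_pM2r // /dual_norm; apply: (ub_le_sup ubS).
by exists (`|u|^-1 *: u) => //=; rewrite normfZV.
Qed.

Lemma differential_bounded (f : V -> R) x :
  differentiable f x -> exists r, forall v, `|'d f x v| <= r * `|v|.
Proof.
move=> /diff_continuous /(linear_bounded_continuous ('d f x)).2.
by move=> /linear_boundedP /pinfty_ex_gt0 [r _ fr]; exists r.
Qed.

Lemma diff_ge_dual_norm {f : V -> R} {x} u : differentiable f x ->
  - (dual_norm ('d f x) * `|u|) <= 'd f x u.
Proof.
move=> /differential_bounded [r fr].
exact: (@dual_norm_lbound ('d f x) r fr (fun k v => linearZ _ _)).
Qed.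

Lemma diffB_ge_dual_norm {f1 f2 : V -> R} {x1 x2} u :
  differentiable f1 x1 -> differentiable f2 x2 ->
  - (dual_norm (fun v => 'd f1 x1 v - 'd f2 x2 v) * `|u|) <= 'd f1 x1 u - 'd f2 x2 u.
Proof.
move=> /differential_bounded [r1 f1r] /differential_bounded [r2 f2r].
apply: (@dual_norm_lbound _ (r1 + r2)) => [v|k v].
  by rewrite mulrDl; apply: le_trans (ler_normB _ _) _; exact: lerD.
by rewrite !linearZ /= -scalerDr.
Qed.

End DualNorm.

Section FollowTheLeader.
Context {R : realType}.

Lemma sumr1_gt0 (c : nat -> R) n :
  (forall k, (1 <= k)%N -> 0 < c k) -> (0 < n)%N -> 0 < \sum_(1 <= k < n.+1) c k.
Proof.
move=> c_gt0 n0; rewrite big_nat_recr //= ltr_wpDl ?c_gt0 // big_nat sumr_ge0 //.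
by move=> k /andP[k1 _]; exact/ltW/c_gt0.
Qed.

Lemma quadratic_ge (a s t : R) : 0 < s ->
  - (a ^+ 2 / (2 * s)) <= s / 2 * t ^+ 2 - a * t.
Proof.
move=> s0; have : 0 <= (s * t - a) ^+ 2 / (2 * s) by rewrite divr_ge0 ?sqr_ge0 ?mulr_ge0 ?ltW.
have -> : (s * t - a) ^+ 2 / (2 * s) = a ^+ 2 / (2 * s) + (s / 2 * t ^+ 2 - a * t).
  by field; rewrite gt_eqF.
lra.
Qed.

Lemma regret_le_sum_leader_gaps (T : Type) (A : set T) (a : nat -> T -> R)
    (z : nat -> T) (c : nat -> R) N x :
  (forall n, (1 <= n)%N -> A (z n)) -> A x ->
  (forall n y, (1 <= n)%N -> A y ->
     \sum_(1 <= m < n.+1) a m (z n) - \sum_(1 <= m < n.+1) a m y <= c n) ->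
  \sum_(1 <= n < N.+1) (a n (z n) - a n x) <= \sum_(1 <= n < N.+1) c n.
Proof.
move=> Az; elim: N x => [|N IH] x Ax gap; first by rewrite !big_geq.
have := IH (z N.+1) (Az N.+1 isT) gap; have := gap N.+1 x isT Ax.
rewrite !(big_nat_recr N.+1) //= !sumrB; lra.
Qed.

Section Regret.
Context {V : normedModType R} {A : set V} {l : nat -> V -> R} {c : nat -> R}
  {z : nat -> V} {mu G : R}.
Hypotheses (A_convex : convex_set A) (mu_gt0 : 0 < mu)
  (c_gt0 : forall n, (1 <= n)%N -> 0 < c n)
  (l_convex : forall n, (1 <= n)%N -> strongly_convex_on A mu (l n))
  (l_diff : forall n, (1 <= n)%N -> forall y, A y -> differentiable (l n) y)
  (l_lipschitz : forall n y, (1 <= n)%N -> A y -> dual_norm ('d (l n) y) <= G)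
  (z1 : A (z 1%N))
  (z_leader : forall n, (1 <= n)%N -> A (z n.+1) /\
     forall y, A y -> \sum_(1 <= k < n.+1) c k * l k (z n.+1)
                      <= \sum_(1 <= k < n.+1) c k * l k y).

Let C n := \sum_(1 <= k < n.+1) c k.

Lemma leader_in n : (1 <= n)%N -> A (z n).
Proof. by case: n => [|[|n]] // _; case: (z_leader n.+1 isT). Qed.

Lemma ftl_leader_gap n y : (1 <= n)%N -> A y ->
  \sum_(1 <= k < n.+1) c k * l k (z n) - \sum_(1 <= k < n.+1) c k * l k y
    <= c n ^+ 2 * G ^+ 2 / (2 * (mu * C n)).
Proof.
case: n => // n n1 Ay; have Az := leader_in _ n1.
set t := `|y - z n.+1|.
have past : mu * C n / 2 * t ^+ 2 <=
    \sum_(1 <= k < n.+1) c k * l k y - \sum_(1 <= k < n.+1) c k * l k (z n.+1).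
  apply: (@strongly_convex_argmin_gap _ _ A _ (fun u => \sum_(1 <= k < n.+1) c k * l k u))
    => //.
    apply: strongly_convex_sum => k; rewrite mem_index_iota => /andP[k1 _].
      exact: l_convex.
    exact/ltW/c_gt0.
  have [-> u Au|n_gt0] := posnP n; first by rewrite !big_geq.
  by case: (z_leader _ n_gt0).
have now := strongly_convex_diff_le (l_convex _ n1) Az Ay (l_diff _ n1 _ Az).
have dl := diff_ge_dual_norm (y - z n.+1) (l_diff _ n1 _ Az).
have lip := l_lipschitz _ _ n1 Az.
have cn := c_gt0 _ n1.
have CS : C n.+1 = C n + c n.+1 by rewrite /C big_nat_recr.
have CP : 0 < mu * C n.+1 by rewrite mulr_gt0 // sumr1_gt0.
have := quadratic_ge (c n.+1 * G) _ t CP; rewrite CS in CP * => q.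
rewrite !(big_nat_recr n.+1) //=.
have : c n.+1 * (- (G * t)) <= c n.+1 * 'd (l n.+1) (z n.+1) (y - z n.+1).
  by rewrite ler_pM2l //; apply: le_trans dl; rewrite lerN2 ler_wpM2r.
move: past now q; rewrite -/t; nra.
Qed.

Lemma ftl_regret N y : A y ->
  \sum_(1 <= n < N.+1) c n * (l n (z n) - l n y)
    <= \sum_(1 <= n < N.+1) c n ^+ 2 * G ^+ 2 / (2 * (mu * C n)).
Proof.
move=> Ay; under eq_bigr do rewrite mulrBr.
exact: (@regret_le_sum_leader_gaps _ A (fun k u => c k * l k u) z _ N y
  leader_in Ay ftl_leader_gap).
Qed.

End Regret.
End FollowTheLeader.

Section PowerSums.
Context {R : realType}.
Implicit Types (a b q r : R) (n N : nat).

Lemma powRB1 a r : 0 < a -> a `^ (r - 1) = a `^ r / a.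
Proof. by move=> a0; rewrite powRB ?(gt_eqF a0) ?implybT // (powRr1 (ltW a0)). Qed.

Lemma powR_le_tangent {r a b} : 0 <= r <= 1 -> 0 < a -> 0 < b ->
  b `^ r <= a `^ r + r * a `^ (r - 1) * (b - a).
Proof.
move=> /andP[r0 r1] a0 b0; have ba0 : 0 < b / a by rewrite divr_gt0.
have mean_gt0 : 0 < r * (b / a) + (1 - r) * 1.
  have [->|r_neq0] := eqVneq r 0; first by rewrite mul0r add0r subr0 mulr1.
  have : 0 < r * (b / a) by rewrite mulr_gt0 // lt_def r_neq0.
  have : 0 <= 1 - r by rewrite subr_ge0.
  lra.
have := @concave_ln R (Itv01 r0 r1) (b / a) 1 ba0 ltr01.
rewrite !convRE /= ln1 mulr0 addr0 -ler_expR lnK ?posrE //.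
rewrite ln_div ?posrE // mulrBr expRB -!ln_powR !lnK ?posrE ?powR_gt0 //.
rewrite powRB1 // ler_pdivrMr ?powR_gt0 //.
suff -> : a `^ r + r * (a `^ r / a) * (b - a) = (r * (b / a) + (1 - r) * 1) * a `^ r.
  by [].
by field; rewrite gt_eqF.
Qed.

Lemma powR_ge_tangent {r a b} : 1 <= r -> 0 < a -> 0 < b ->
  a `^ r + r * a `^ (r - 1) * (b - a) <= b `^ r.
Proof.
move=> r1 a0 b0; set T := _ + _.
have [T_le0|T_gt0] := leP T 0; first by rewrite (le_trans T_le0) ?powR_ge0.
have r0 : 0 < r by exact: lt_le_trans r1.
have ar0 : 0 < a `^ r by rewrite powR_gt0.
have ar_root : (a `^ r) `^ r^-1 = a by rewrite -powRrM mulfV ?gt_eqF // powRr1 // ltW.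
have := @powR_le_tangent r^-1 _ _ _ ar0 T_gt0.
rewrite invr_ge0 (ltW r0) invf_le1 // r1 => /(_ isT).
have -> : T - a `^ r = r * (a `^ r / a) * (b - a) by rewrite /T powRB1 // addrAC subrr add0r.
rewrite ar_root powRB1 // ar_root.
have -> : r^-1 * (a / a `^ r) * (r * (a `^ r / a) * (b - a)) = b - a.
  by field; rewrite !gt_eqF.
rewrite subrKC => T_root_le_b.
have -> : T = (T `^ r^-1) `^ r by rewrite -powRrM mulVf ?gt_eqF // powRr1 // ltW.
by apply: ge0_ler_powR; rewrite ?nnegrE ?powR_ge0 ?(ltW b0) ?(ltW r0).
Qed.

Lemma powR_le_sum q n : 1 <= q ->
  n%:R `^ q <= q * \sum_(1 <= k < n.+1) k%:R `^ (q - 1).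
Proof.
move=> q1; have q0 : 0 < q by exact: lt_le_trans q1.
elim: n => [|n IH]; first by rewrite big_geq // mulr0 powR0 // gt_eqF.
rewrite big_nat_recr //= mulrDr; case: n IH => [|n] IH.
  by rewrite big_geq // mulr0 add0r powR1 mulr1.
have step : (n.+1%:R - n.+2%:R : R) = -1 by rewrite -[n.+2]addn1 natrD; ring.
have := powR_ge_tangent q1 (ltr0Sn _ n.+1) (ltr0Sn _ n); rewrite step; lra.
Qed.

Lemma sum_powR_le q n : 0 < q ->
  q * \sum_(1 <= k < n.+1) k%:R `^ (q - 1) <= n.+1%:R `^ q.
Proof.
move=> q0; have [q1|q_lt1] := leP 1 q.
  elim: n => [|n IH]; first by rewrite big_geq // mulr0 powR_ge0.
  rewrite big_nat_recr //= mulrDr.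
  have step : (n.+2%:R - n.+1%:R : R) = 1 by rewrite -[n.+2]addn1 natrD; ring.
  have := powR_ge_tangent q1 (ltr0Sn _ n) (ltr0Sn _ n.+1); rewrite step; lra.
suff : q * \sum_(1 <= k < n.+1) k%:R `^ (q - 1) <= n%:R `^ q.
  move=> /le_trans; apply; apply: ge0_ler_powR; rewrite ?nnegrE ?ler_nat //.
  exact: ltW.
elim: n => [|n IH]; first by rewrite big_geq // mulr0 powR_ge0.
rewrite big_nat_recr //= mulrDr; case: n IH => [|n] IH.
  by rewrite big_geq // mulr0 add0r powR1 mulr1 ltW.
have q01 : 0 <= q <= 1 by rewrite !ltW.
have step : (n.+1%:R - n.+2%:R : R) = -1 by rewrite -[n.+2]addn1 natrD; ring.
have := powR_le_tangent q01 (ltr0Sn _ n.+1) (ltr0Sn _ n); rewrite step; lra.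
Qed.

Lemma powRS_le_expR q N : 0 <= q -> (0 < N)%N ->
  N.+1%:R `^ q <= N%:R `^ q * expR (q / N%:R).
Proof.
move=> q0 N0; have N_gt0 : (0 : R) < N%:R by rewrite ltr0n.
have N1 : N.+1%:R = N%:R * (1 + N%:R^-1) :> R by rewrite mulrDr mulr1 mulfV ?gt_eqF // natr1.
rewrite -ler_ln ?posrE ?mulr_gt0 ?powR_gt0 ?expR_gt0 ?ltr0Sn //.
rewrite lnM ?posrE ?powR_gt0 ?expR_gt0 // !ln_powR expRK N1 lnM ?posrE //.
rewrite mulrDr lerD2l ler_wpM2l // le_ln1Dx // (lt_le_trans (ltrN10 _)) // invr_ge0 ltW.
Qed.

Lemma sum_powR_le_expR q N : 0 < q -> (0 < N)%N ->
  \sum_(1 <= k < N.+1) k%:R `^ (q - 1) <= N%:R `^ q * expR (q / N%:R) / q.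
Proof.
move=> q0 N0; rewrite ler_pdivlMr // mulrC.
exact: le_trans (sum_powR_le _ N q0) (powRS_le_expR _ _ (ltW q0) N0).
Qed.

Lemma powR_sqr_le_sum q n : 1 <= q -> (0 < n)%N ->
  (n%:R `^ (q - 1)) ^+ 2
    <= q * (n%:R `^ (q - 1) / n%:R) * \sum_(1 <= k < n.+1) k%:R `^ (q - 1).
Proof.
move=> q1 n0; have n_gt0 : (0 : R) < n%:R by rewrite ltr0n.
set x := n%:R `^ (q - 1) / n%:R; set S := \sum_(1 <= k < n.+1) _.
have x_gt0 : 0 < x by rewrite divr_gt0 ?powR_gt0.
have -> : (n%:R `^ (q - 1)) ^+ 2 = x * n%:R `^ q.
  by rewrite /x powRB1 //; field; rewrite gt_eqF.
have -> : q * x * S = x * (q * S) by ring.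
by rewrite ler_pM2l // powR_le_sum.
Qed.

End PowerSums.

Section Weights.
Context {R : realType}.
Implicit Types (p : R) (n N : nat).

Lemma wpow_ge0 p n : 0 <= wpow p n.
Proof. exact: powR_ge0. Qed.

Lemma wpow_gt0 p n : (0 < n)%N -> 0 < wpow p n.
Proof. by move=> n0; rewrite powR_gt0 // ltr0n. Qed.

Lemma wpowE p n : wpow p n = n%:R `^ (p + 1 - 1).
Proof. by rewrite addrK. Qed.

Lemma wpow_divE p n : (0 < n)%N -> wpow p n / n%:R = n%:R `^ (p - 1).
Proof. by move=> n0; rewrite powRB1 // ltr0n. Qed.

Lemma wsum_gt0 p N : (0 < N)%N -> 0 < wsum p N.
Proof.
exact: sumr1_gt0 (wpow_gt0 p).
Qed.

Lemma wsum_ge p N : 0 <= p -> N%:R `^ (p + 1) / (p + 1) <= wsum p N.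
Proof.
move=> p0; have p1 : 1 <= p + 1 by rewrite lerDr.
rewrite ler_pdivrMr ?(lt_le_trans ltr01) // mulrC /wsum.
by rewrite (eq_bigr _ (fun n _ => wpowE p n)) powR_le_sum.
Qed.

Lemma wsum_div_le p N (mu_f mu_h G eps r : R) :
  1 < p -> (0 < N)%N -> 0 < mu_f -> 0 < mu_h -> 0 <= eps ->
  r <= (p + 1) / (2 * mu_f) * (N%:R `^ p * expR (p / N%:R) / p * eps
         + p * G ^+ 2 / (2 * mu_h) * (N%:R `^ (p - 1) * expR (p / N%:R) / (p - 1))) ->
  r / wsum p N <= (p + 1) ^+ 2 * expR (p / N%:R) / (2 * mu_f) *
    (p * G ^+ 2 / (2 * (p - 1) * mu_h) * (1 / N%:R ^+ 2) + eps / (p * N%:R)).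
Proof.
move=> p_gt1 N0 mu_f_gt0 mu_h_gt0 eps_ge0.
have p_gt0 : 0 < p by exact: lt_trans p_gt1.
have pm1_gt0 : 0 < p - 1 by rewrite subr_gt0.
have p1_gt0 : 0 < p + 1 by rewrite addr_gt0.
have N_gt0 : (0 : R) < N%:R by rewrite ltr0n.
set E := expR (p / N%:R); set B := _ * (_ + _) => r_le.
have B_ge0 : 0 <= B.
  by rewrite /B !(ltW p_gt0, ltW pm1_gt0, ltW mu_f_gt0, ltW mu_h_gt0, eps_ge0, sqr_ge0,
    expR_ge0, ler01, ler0n, invr_ge0, mulr_ge0, divr_ge0, addr_ge0).
have L_gt0 : 0 < N%:R `^ (p + 1) / (p + 1) by rewrite divr_gt0 ?powR_gt0.
have W_gt0 := wsum_gt0 p N N0.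
have Winv_ge0 : 0 <= (wsum p N)^-1 by rewrite invr_ge0 ltW.
refine (le_trans (ler_wpM2r Winv_ge0 r_le) _).
refine (le_trans (ler_wpM2l B_ge0 (_ : _ <= (N%:R `^ (p + 1) / (p + 1))^-1)) _).
  by rewrite lef_pV2 ?posrE // wsum_ge // ltW.
rewrite le_eqVlt; apply/predU1l.
have NpE : N%:R `^ p = N%:R `^ (p - 1) * N%:R by rewrite powRB1 // divfK ?gt_eqF.
have Np1E : N%:R `^ (p + 1) = N%:R `^ p * N%:R.
  by rewrite powRD ?(gt_eqF N_gt0) ?implybT // powRr1 // ltW.
have P_gt0 : 0 < N%:R `^ (p - 1) by rewrite powR_gt0.
by rewrite /B Np1E NpE; field; rewrite !gt_eqF.
Qed.

End Weights.

Section PolicyRegret.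
Context {R : realType} {X M : normedModType R} {Pi : set X} {Fset : set M}
  {F : X -> X -> R} {Fhat : M -> X -> X -> R} {h : X -> M -> R} {mu_f p : R}
  { pi : nat -> X } {Fh : nat -> M}.
Hypotheses (p_ge0 : 0 <= p) (mu_f_gt0 : 0 < mu_f)
  (F_diff : forall x y, Pi x -> Pi y -> differentiable (F x) y)
  (Fhat_diff : forall m x y, Fset m -> Pi x -> Pi y -> differentiable (Fhat m x) y)
  (f_convex : forall n, (1 <= n)%N -> strongly_convex_on Pi mu_f (F (pi n)))
  (model_error : forall n m, (1 <= n)%N -> Fset m ->
     dual_norm (fun v => 'd (F (pi n)) (pi n) v - 'd (Fhat m (pi n)) (pi n) v) ^+ 2
       <= h (pi n) m)
  (Fh_in : forall n, (1 <= n)%N -> Fset (Fh n))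
  (vi : forall n, Pi (pi n.+1) /\
     forall x, Pi x -> 0 <= PhiVI p F Fhat pi Fh n (pi n.+1) (x - pi n.+1)).

Lemma policy_in n : (1 <= n)%N -> Pi (pi n).
Proof. by case: n => // n _; case: (vi n). Qed.

Lemma policy_leader_gap n y : (1 <= n)%N -> Pi y ->
  \sum_(1 <= m < n.+1) wpow p m * F (pi m) (pi n)
    - \sum_(1 <= m < n.+1) wpow p m * F (pi m) y
  <= wpow p n ^+ 2 * h (pi n) (Fh n) / (2 * (mu_f * wsum p n)).
Proof.
case: n => // n n1 Py; have Pz := policy_in _ n1.
set t := `|y - pi n.+1|.
have growth :
    \sum_(1 <= m < n.+2) wpow p m * 'd (F (pi m)) (pi n.+1) (y - pi n.+1)
      + mu_f * wsum p n.+1 / 2 * t ^+ 2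
    <= \sum_(1 <= m < n.+2) wpow p m * F (pi m) y
       - \sum_(1 <= m < n.+2) wpow p m * F (pi m) (pi n.+1).
  have -> : mu_f * wsum p n.+1 / 2 * t ^+ 2 =
      \sum_(1 <= m < n.+2) wpow p m * (mu_f / 2 * t ^+ 2).
    by rewrite -mulr_suml /wsum; ring.
  rewrite -big_split -sumrB /=.
  apply: ler_sum_nat => m /andP[m1 _]; rewrite -mulrDr -mulrBr ler_wpM2l ?wpow_ge0 //.
  exact: strongly_convex_diff_le (f_convex _ m1) Pz Py (F_diff _ _ (policy_in _ m1) Pz).
(* The VI of round n - 1 is first-order optimality of the cumulative loss, with the model
   gradient standing in for that of f_n; so only the model error is left to pay for. *)
have := (vi n).2 y Py; rewrite /PhiVI => vi_n.
have err := diffB_ge_dual_norm (y - pi n.+1) (F_diff _ _ Pz Pz)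
  (Fhat_diff _ _ _ (Fh_in _ n1) Pz Pz).
have := model_error _ _ n1 (Fh_in _ n1).
set D := dual_norm _ in err * => D2_le; rewrite -/t in err.
have sigma_gt0 : 0 < mu_f * wsum p n.+1 by rewrite mulr_gt0 ?wsum_gt0.
have := quadratic_ge (wpow p n.+1 * D) _ t sigma_gt0.
have : (wpow p n.+1 * D) ^+ 2 / (2 * (mu_f * wsum p n.+1))
    <= wpow p n.+1 ^+ 2 * h (pi n.+1) (Fh n.+1) / (2 * (mu_f * wsum p n.+1)).
  rewrite ler_pM2r ?invr_gt0 ?pmulr_rgt0 ?wsum_gt0 //.
  have -> : (wpow p n.+1 * D) ^+ 2 = wpow p n.+1 ^+ 2 * D ^+ 2 by ring.
  by rewrite ler_wpM2l ?sqr_ge0.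
have := ler_wpM2l (wpow_ge0 p n.+1) err.
move: growth vi_n; rewrite big_nat_recr //=; lra.
Qed.

Lemma wregret_le_model_loss N x : Pi x ->
  wregret_at p F pi N x
    <= (p + 1) / (2 * mu_f) * \sum_(1 <= n < N.+1) wpow p n / n%:R * h (pi n) (Fh n).
Proof.
move=> Px; apply: (@le_trans _ _
    (\sum_(1 <= n < N.+1) wpow p n ^+ 2 * h (pi n) (Fh n) / (2 * (mu_f * wsum p n)))).
  rewrite /wregret_at; under eq_bigr do rewrite mulrBr.
  exact: (@regret_le_sum_leader_gaps _ _ Pi (fun m u => wpow p m * F (pi m) u) pi _ N x
    policy_in Px policy_leader_gap).
rewrite mulr_sumr; apply: ler_sum_nat => n /andP[n1 _].
have h_ge0 : 0 <= h (pi n) (Fh n).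
  exact: le_trans (sqr_ge0 _) (model_error _ _ n1 (Fh_in _ n1)).
have W_gt0 := wsum_gt0 p _ n1.
have p1 : 1 <= p + 1 by rewrite lerDr.
have := @powR_sqr_le_sum _ (p + 1) n p1 n1.
rewrite -!wpowE -(eq_bigr _ (fun k _ => wpowE p k)) -/(wsum p n) => w2_le.
have -> : (p + 1) / (2 * mu_f) * (wpow p n / n%:R * h (pi n) (Fh n)) =
    (p + 1) * (wpow p n / n%:R) * wsum p n * h (pi n) (Fh n) / (2 * (mu_f * wsum p n)).
  by field; rewrite !gt_eqF ?ltr0n.
have D_ge0 : 0 <= (2 * (mu_f * wsum p n))^-1 by rewrite invr_ge0 !mulr_ge0 // ltW.
exact (ler_wpM2r D_ge0 (ler_wpM2r h_ge0 w2_le)).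
Qed.

End PolicyRegret.

Section ModelLoss.
Context {R : realType} {X M : normedModType R} {Pi : set X} {Fset : set M}
  {h : X -> M -> R} {mu_h G_h eps p : R} { pi : nat -> X } {Fh : nat -> M}.
Hypotheses (Fset_convex : convex_set Fset) (mu_h_gt0 : 0 < mu_h) (p_gt1 : 1 < p)
  (h_convex : forall n, (1 <= n)%N -> strongly_convex_on Fset mu_h (h (pi n)))
  (h_diff : forall n, (1 <= n)%N -> forall m, Fset m -> differentiable (h (pi n)) m)
  (h_lipschitz : forall n m, (1 <= n)%N -> Fset m -> dual_norm ('d (h (pi n)) m) <= G_h)
  (h_ge0 : forall n m, (1 <= n)%N -> Fset m -> 0 <= h (pi n) m)
  (pi_in : forall n, (1 <= n)%N -> Pi (pi n))
  (eps_approx : forall (K : nat) (theta : nat -> R) (ps : nat -> X),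
     (forall n, (1 <= n <= K)%N -> 0 < theta n) ->
     \sum_(1 <= n < K.+1) theta n = 1 ->
     (forall n, (1 <= n <= K)%N -> Pi (ps n)) ->
     forall e, 0 < e -> exists m, Fset m /\
       \sum_(1 <= n < K.+1) theta n * h (ps n) m <= eps + e)
  (Fh1 : Fset (Fh 1%N))
  (Fh_leader : forall n, (1 <= n)%N -> Fset (Fh n.+1) /\
     forall m, Fset m ->
       \sum_(1 <= k < n.+1) wpow p k / k%:R * h (pi k) (Fh n.+1)
       <= \sum_(1 <= k < n.+1) wpow p k / k%:R * h (pi k) m).

Lemma eps_ge0 : 0 <= eps.
Proof.
apply/ler_addgt0Pr => e e0.
have [|||m [Fm]] := eps_approx 1 (fun=> 1) pi _ _ _ _ e0.
- by move=> n _; exact: ltr01.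
- exact: big_nat1.
- by move=> n /andP[n1 _]; exact: pi_in.
by rewrite big_nat1 mul1r; apply: le_trans; exact: h_ge0.
Qed.

Lemma model_loss_le_eps N e : 0 < e -> (0 < N)%N ->
  \sum_(1 <= n < N.+1) wpow p n / n%:R * h (pi n) (Fh n)
    <= (\sum_(1 <= n < N.+1) n%:R `^ (p - 1)) * (eps + e)
       + p * G_h ^+ 2 / (2 * mu_h) * \sum_(1 <= n < N.+1) n%:R `^ (p - 1 - 1).
Proof.
move=> e0 N0; set v := fun n : nat => wpow p n / n%:R.
have v_gt0 n : (1 <= n)%N -> 0 < v n by move=> n1; rewrite divr_gt0 ?wpow_gt0 ?ltr0n.
have sumvE n : \sum_(1 <= k < n.+1) v k = \sum_(1 <= k < n.+1) k%:R `^ (p - 1).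
  by apply: eq_big_nat => k /andP[k1 _]; exact: wpow_divE.
set V := \sum_(1 <= n < N.+1) n%:R `^ (p - 1).
have V_gt0 : 0 < V by rewrite /V -sumvE sumr1_gt0.
have [|||m [Fm best]] := eps_approx N (fun n => v n / V) pi _ _ _ _ e0.
- by move=> n /andP[n1 _]; rewrite divr_gt0 ?v_gt0.
- by rewrite -mulr_suml sumvE -/V mulfV ?gt_eqF.
- by move=> n /andP[n1 _]; exact: pi_in.
have := ftl_regret Fset_convex mu_h_gt0 v_gt0 h_convex h_diff h_lipschitz Fh1 Fh_leader N m Fm.
rewrite (eq_bigr _ (fun n _ => mulrBr _ _ _)) sumrB => regret.
have stability :
    \sum_(1 <= n < N.+1) v n ^+ 2 * G_h ^+ 2 / (2 * (mu_h * \sum_(1 <= k < n.+1) v k))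
    <= p * G_h ^+ 2 / (2 * mu_h) * \sum_(1 <= n < N.+1) n%:R `^ (p - 1 - 1).
  rewrite mulr_sumr; apply: ler_sum_nat => n /andP[n1 _].
  have vn : v n / n%:R = n%:R `^ (p - 1 - 1) by rewrite /v /wpow !powRB1 ?ltr0n.
  have := powR_sqr_le_sum _ _ (ltW p_gt1) n1.
  rewrite -sumvE -(wpow_divE p _ n1) -/(v n) vn.
  set S := \sum_(1 <= k < n.+1) v k => v2_le.
  have S_gt0 : 0 < S by rewrite /S sumr1_gt0.
  have -> : p * G_h ^+ 2 / (2 * mu_h) * n%:R `^ (p - 1 - 1) =
      p * n%:R `^ (p - 1 - 1) * S * G_h ^+ 2 / (2 * (mu_h * S)).
    by field; rewrite !gt_eqF.
  have D_ge0 : 0 <= (2 * (mu_h * S))^-1 by rewrite invr_ge0 !mulr_ge0 // ltW.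
  exact (ler_wpM2r D_ge0 (ler_wpM2r (sqr_ge0 G_h) v2_le)).
have optimum : \sum_(1 <= n < N.+1) v n * h (pi n) m <= V * (eps + e).
  by move: best; under eq_bigr do rewrite mulrAC; rewrite -mulr_suml ler_pdivrMr // mulrC.
move: regret stability optimum; rewrite -/v; lra.
Qed.

Lemma model_loss_le N : (0 < N)%N ->
  \sum_(1 <= n < N.+1) wpow p n / n%:R * h (pi n) (Fh n)
    <= N%:R `^ p * expR (p / N%:R) / p * eps
       + p * G_h ^+ 2 / (2 * mu_h) * (N%:R `^ (p - 1) * expR (p / N%:R) / (p - 1)).
Proof.
move=> N0; set E := expR (p / N%:R); set B := N%:R `^ p * E / p.
have p_gt0 : 0 < p by exact: lt_trans p_gt1.
have pm1_gt0 : 0 < p - 1 by rewrite subr_gt0.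
have B_gt0 : 0 < B by rewrite divr_gt0 ?mulr_gt0 ?powR_gt0 ?ltr0n ?expR_gt0.
have V_le : \sum_(1 <= n < N.+1) n%:R `^ (p - 1) <= B := sum_powR_le_expR _ _ p_gt0 N0.
have T_le : \sum_(1 <= n < N.+1) n%:R `^ (p - 1 - 1) <= N%:R `^ (p - 1) * E / (p - 1).
  apply: le_trans (sum_powR_le_expR _ _ pm1_gt0 N0) _.
  rewrite ler_pM2r ?invr_gt0 // ler_pM2l ?powR_gt0 ?ltr0n // ler_expR.
  by rewrite ler_pM2r ?invr_gt0 ?ltr0n // gerBl.
have K_ge0 : 0 <= p * G_h ^+ 2 / (2 * mu_h).
  by apply: divr_ge0; apply: mulr_ge0 => //; [exact: ltW | exact: sqr_ge0 | exact: ltW].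
apply/ler_addgt0Pr => e e0; have e'_gt0 : 0 < e / B by rewrite divr_gt0.
have := model_loss_le_eps _ _ e'_gt0 N0.
have := ler_wpM2r (addr_ge0 eps_ge0 (ltW e'_gt0)) V_le.
have := ler_wpM2l K_ge0 T_le.
have : B * (e / B) = e by rewrite mulrC divfK ?gt_eqF.
lra.
Qed.

End ModelLoss.

Theorem theorem2 (R : realType) (X M : normedModType R)
  (Pi : set X) (Fset : set M)
  (F : X -> X -> R) (Fhat : M -> X -> X -> R) (h : X -> M -> R)
  (L mu_f G_f mu_h G_h eps p : R) (pi : nat -> X) (Fh : nat -> M) (N : nat) :
  (* the policy class and the model class *)
  compact Pi -> convex_set Pi -> convex_set Fset ->
  (* F and the models are differentiable in their second argument on Pi *)
  (forall x y, Pi x -> Pi y -> differentiable (F x) y) ->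
  (forall m x y, Fset m -> Pi x -> Pi y -> differentiable (Fhat m x) y) ->
  (* Lipschitz continuity of pi |-> grad_2 Fhat(pi, pi) *)
  0 <= L ->
  (forall m x y, Fset m -> Pi x -> Pi y ->
     dual_norm (fun v => ('d (Fhat m x) x) v - ('d (Fhat m y) y) v)
       <= L * `|x - y|) ->
  (* assumptions on the per-round costs f_n = F(pi_n, .) and h_n = h(pi_n) *)
  0 < mu_f -> 0 < mu_h ->
  (forall n, (1 <= n)%N -> strongly_convex_on Pi mu_f (F (pi n))) ->
  (forall n x, (1 <= n)%N -> Pi x -> dual_norm ('d (F (pi n)) x) <= G_f) ->
  (forall n, (1 <= n)%N -> strongly_convex_on Fset mu_h (h (pi n))) ->
  (forall n, (1 <= n)%N -> forall m, Fset m -> differentiable (h (pi n)) m) ->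
  (forall n m, (1 <= n)%N -> Fset m -> dual_norm ('d (h (pi n)) m) <= G_h) ->
  (forall n m, (1 <= n)%N -> Fset m ->
     dual_norm (fun v => ('d (F (pi n)) (pi n)) v
                         - ('d (Fhat m (pi n)) (pi n)) v) ^+ 2
       <= h (pi n) m) ->
  (* the constant eps^w_{Fhat} (min over the model class read as an infimum) *)
  (forall (K : nat) (theta : nat -> R) (ps : nat -> X),
     (forall n, (1 <= n <= K)%N -> 0 < theta n) ->
     \sum_(1 <= n < K.+1) theta n = 1 ->
     (forall n, (1 <= n <= K)%N -> Pi (ps n)) ->
     forall e, 0 < e -> exists m, Fset m /\
       \sum_(1 <= n < K.+1) theta n * h (ps n) m <= eps + e) ->
  (* MoBIL-VI: the initial model, model updates and VI policy updates *)
  Fset (Fh 1%N) ->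
  (forall n, (1 <= n)%N -> Fset (Fh n.+1) /\
     forall m, Fset m ->
       \sum_(1 <= k < n.+1) wpow p k / k%:R * h (pi k) (Fh n.+1)
       <= \sum_(1 <= k < n.+1) wpow p k / k%:R * h (pi k) m) ->
  (forall n, Pi (pi n.+1) /\
     forall x, Pi x ->
       0 <= PhiVI p F Fhat pi Fh n (pi n.+1) (x - pi n.+1)) ->
  (* conclusion *)
  1 < p -> (1 <= N)%N ->
  forall x, Pi x ->
    wregret_at p F pi N x / wsum p N <=
      (p + 1) ^+ 2 * expR (p / N%:R) / (2 * mu_f) *
      (p * G_h ^+ 2 / (2 * (p - 1) * mu_h) * (1 / (N%:R ^+ 2))
       + eps / (p * N%:R)).
Proof.
(* Compactness and convexity of Pi, L and G_f serve in the paper only to make the VIs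
   solvable; here their solutions pi_(n+1) are given. *)
move=> _ _ Fset_convex F_diff Fhat_diff _ _ mu_f_gt0 mu_h_gt0 f_convex _
  h_convex h_diff h_lipschitz model_error eps_approx Fh1 Fh_leader vi p_gt1 N_gt0 x Px.
have p_gt0 : 0 < p by exact: lt_trans p_gt1.
have pi_in := policy_in vi.
have Fh_in := leader_in Fh1 Fh_leader.
have h_ge0 n m : (1 <= n)%N -> Fset m -> 0 <= h (pi n) m.
  by move=> n1 Fm; apply: le_trans (model_error n m n1 Fm); exact: sqr_ge0.
have regret := wregret_le_model_loss (ltW p_gt0) mu_f_gt0 F_diff Fhat_diff f_convex
  model_error Fh_in vi N x Px.
have loss := model_loss_le Fset_convex mu_h_gt0 p_gt1 h_convex h_diff h_lipschitz h_ge0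
  pi_in eps_approx Fh1 Fh_leader N N_gt0.
apply: wsum_div_le => //; first exact: eps_ge0 h_ge0 pi_in eps_approx.
apply: le_trans regret _; apply: ler_wpM2l loss.
by rewrite divr_ge0 ?mulr_ge0 ?addr_ge0 ?ltW.
Qed.
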